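(* For every integer $k\ge 1$ there exists a graph $G$ with $\operatorname{tw}(G)\le k$ and $\operatorname{box}(G)\ge k\left(1-\frac{2}{\sqrt{k}}\right)$.
   Context: The boxicity $\operatorname{box}(G)$ is the minimum $b$ such that $G$ is the intersection graph of axis-parallel boxes in $\mathbb{R}^b$ (products of $b$ closed intervals), one box per vertex. The treewidth $\operatorname{tw}(G)$ is the minimum, over all tree decompositions $(\{X_i\},T)$ of $G$ (a tree $T$ with vertex subsets $X_i$ at its nodes covering all vertices and all edges, such that for each vertex the nodes containing it form a connected subtree), of $\max_i|X_i|-1$. *)

From Stdlib Require Import Reals.
From mathcomp Require Import all_boot.

Set Implicit Arguments.
Unset Strict Implicit.
Unset Printing Implicit Defensive.

Definition simple_graph (T : finType) (e : rel T) : Prop :=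
  symmetric e /\ irreflexive e.

Definition box_representation (T : finType) (e : rel T) (b : nat) : Prop :=
  exists (l u : T -> nat -> R),
    (forall x i, (i < b)%N -> Rle (l x i) (u x i)) /\
    (forall x y, x <> y ->
       (e x y <-> exists p : nat -> R, forall i, (i < b)%N ->
          Rle (l x i) (p i) /\ Rle (p i) (u x i) /\
          Rle (l y i) (p i) /\ Rle (p i) (u y i))).

(* box(G) >= r : every box representation of G uses dimension at least r
   (box(G) is the minimum such dimension, which always exists for finite graphs). *)
Definition boxicity_ge (T : finType) (e : rel T) (r : R) : Prop :=
  forall b, box_representation e b -> Rle r (INR b).

Definition is_tree (I : finType) (t : rel I) : Prop :=
  [/\ symmetric t, irreflexive t,
      (forall i j, connect t i j) &
      (forall c : seq I, uniq c -> (2 < size c)%N -> ~~ cycle t c)].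

Definition tree_decomposition (T : finType) (e : rel T)
    (I : finType) (t : rel I) (X : I -> {set T}) : Prop :=
  [/\ is_tree t,
      (forall v : T, exists i, v \in X i),
      (forall v w : T, e v w -> exists i, (v \in X i) && (w \in X i)) &
      (forall v : T, forall i j, v \in X i -> v \in X j ->
         connect [rel a b | [&& t a b, v \in X a & v \in X b]] i j)].

Definition treewidth_le (T : finType) (e : rel T) (k : nat) : Prop :=
  exists (I : finType) (t : rel I) (X : I -> {set T}),
    tree_decomposition e t X /\ forall i, (#|X i| <= k.+1)%N.

(* The graph: a clique on 'I_n together with a vertex (x, Z) for every set Z
   of at most q points and every x in Z; (x, Z) is adjacent to every clique
   vertex except x, and the vertices (x, Z), x in Z, form a clique.  A star
   decomposition with centre bag 'I_n and one leaf bag 'I_n + {(x, Z) | x in Z}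
   per set Z has bags of size n + q.

   In a box representation of dimension b, the box of (x, Z) misses that of
   x, so in some coordinate d the interval of (x, Z) lies strictly to the
   right or to the left of that of x.  As the clique intervals pairwise meet,
   each coordinate separates at most one point on each side, so the points it
   separates form a set F d with at most two elements; as the boxes of the
   (x, Z), x in Z, pairwise meet, distinct points of Z are separated in
   distinct coordinates, so at least |Z| of the sets F d meet Z whenever
   |Z| <= q.  Peeling off maximal blocks shows that this forces at least
   q n / (q + 1) coordinates, and with q = floor (sqrt k) and n = k + 1 - q
   this is at least k - 2 sqrt k. *)

From Stdlib Require Import Reals Lra Psatz.
From mathcomp Require Import all_boot zify.

Set Implicit Arguments.
Unset Strict Implicit.
Unset Printing Implicit Defensive.

Lemma card_le2_three (T : finType) (A : {set T}) (x y z : T) :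
  #|A| <= 2 -> x \in A -> y \in A -> z \in A -> [|| x == y, x == z | y == z].
Proof.
move=> A2 xA yA zA; apply: contraTT A2 => /norP[xy /norP[xz yz]].
have sub : x |: (y |: [set z]) \subset A by rewrite !subUset !sub1set xA yA zA.
rewrite -ltnNge; apply: leq_trans (subset_leq_card sub).
by rewrite !cardsU1 cards1 !inE (negbTE xy) (negbTE xz) (negbTE yz).
Qed.

Lemma leq_card_rel (E D : finType) (Z : {set E}) (A : {set D}) (R : E -> D -> bool) :
  (forall x, x \in Z -> exists2 d, d \in A & R x d) ->
  (forall x y d, x \in Z -> y \in Z -> R x d -> R y d -> x = y) ->
  #|Z| <= #|A|.
Proof.
move=> R_total R_inj; pose f x := [pick d in A | R x d].
have fP x : x \in Z -> {d | f x = Some d & (d \in A) && R x d}.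
  rewrite /f => xZ; case: pickP => [d dP | none]; first by exists d.
  by exfalso; have [d dA xd] := R_total x xZ; move: (none d); rewrite dA xd.
have f_inj : {in Z &, injective f}.
  move=> x y xZ yZ; have [d -> /andP[_ xd]] := fP x xZ.
  have [d' -> /andP[_ yd]] := fP y yZ; case=> ed.
  by apply: (R_inj x y d) => //; rewrite ed.
rewrite -(card_in_imset f_inj) -(card_imset A (@Some_inj _)).
apply/subset_leq_card/subsetP => _ /imsetP[x xZ ->].
by have [d -> /andP[dA _]] := fP x xZ; apply: imset_f.
Qed.

Section Touching.

Variables (E D : finType) (F : D -> {set E}).

Definition touching (Y : {set E}) : {set D} := [set d | F d :&: Y != set0].
Definition inside (Z : {set E}) : {set D} := [set d | (F d != set0) && (F d \subset Z)].

Lemma touchingU (A B : {set E}) : touching (A :|: B) = touching A :|: touching B.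
Proof. by apply/setP => d; rewrite !inE setIUr -negb_and setU_eq0. Qed.

Lemma card_touching_split (Y Z : {set E}) : Z \subset Y ->
  #|touching (Y :\: Z)| + #|touching Z :\: touching (Y :\: Z)| = #|touching Y|.
Proof.
move=> sZY; have {3}-> : Y = (Y :\: Z) :|: Z.
  apply/setP => x; rewrite !inE.
  by case: (boolP (x \in Z)) => [/(subsetP sZY) ->|] /=; rewrite ?orbT ?orbF.
rewrite touchingU cardsU cardsD setIC.
by rewrite addnBA // subset_leq_card // subsetIr.
Qed.

Lemma inside_sub_touching_only (Y Z : {set E}) :
  inside Z \subset touching Z :\: touching (Y :\: Z).
Proof.
apply/subsetP => d; rewrite !inE => /andP[nF sFZ].
rewrite (setIidPl sFZ) nF andbT negbK; apply/eqP/setP => x; rewrite !inE.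
by apply/negP => /and3P[xF xZ _]; move: xZ; rewrite (subsetP sFZ).
Qed.

Section TwoPointSets.

Hypothesis F_le2 : forall d, #|F d| <= 2.

Lemma card_inside_grow (Z : {set E}) (y z : E) (d : D) :
  z \in Z -> y \notin Z -> z \in F d -> y \in F d -> #|inside Z| < #|inside (y |: Z)|.
Proof.
move=> zZ yZ zF yF.
have d_out : d \notin inside Z.
  by rewrite inE negb_and orbC; apply/orP; left; apply/subsetPn; exists y.
have sub : d |: inside Z \subset inside (y |: Z).
  apply/subsetP => d'; rewrite !inE => /orP[/eqP-> | /andP[-> sZ]].
  - apply/andP; split; first by apply/set0Pn; exists z.
    apply/subsetP => w wF; rewrite !inE.
    case/or3P: (card_le2_three (F_le2 d) wF zF yF) => /eqP e.
    + by rewrite e zZ orbT.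
    + by rewrite e eqxx.
    + by move: yZ; rewrite -e zZ.
  - by apply: subset_trans sZ (subsetUr _ _).
by have := subset_leq_card sub; rewrite cardsU1 d_out.
Qed.

Variable q : nat.
Hypothesis small_sets_touch : forall Z : {set E}, #|Z| <= q -> #|Z| <= #|touching Z|.

Lemma exists_block (Y : {set E}) : Y != set0 ->
  exists2 Z : {set E}, (Z \subset Y) && (Z != set0) &
    q * #|Z| <= q.+1 * #|touching Z :\: touching (Y :\: Z)|.
Proof.
case/set0Pn=> y0 y0Y.
(* Take Z maximal among the subsets of Y of size at most q + 1 that contain at
   least |Z| - 1 of the sets F d; when |Z| <= q, maximality forbids any F d to
   meet both Z and Y :\: Z. *)
pose P (Z : {set E}) := [&& Z \subset Y, Z != set0, #|Z| <= q.+1 & #|Z| <= #|inside Z|.+1].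
have P0 : P [set y0].
  by rewrite /P sub1set y0Y cards1 -card_gt0 cards1.
case: (arg_maxnP (fun Z : {set E} => #|Z|) P0) => Z /and4P[sZY nZ leZq1 leZin] maxZ.
exists Z; first by rewrite sZY nZ.
have := subset_leq_card (inside_sub_touching_only Y Z).
case: (leqP #|Z| q) => [leZq _ | ltqZ le_in]; last by nia.
have no_cross d : d \in touching Z -> d \notin touching (Y :\: Z).
  rewrite !inE => /set0Pn[z /setIP[zF zZ]]; apply/negP => /set0Pn[y /setIP[yF]].
  case/setDP=> yY yZ.
  have: P (y |: Z).
    rewrite /P subUset sub1set yY sZY cardsU1 yZ /= !ltnS leZq.
    apply/and3P; split=> //; first by apply/set0Pn; exists y; rewrite setU11.
    exact: leq_trans leZin (card_inside_grow zZ yZ zF yF).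
  by move/maxZ; rewrite cardsU1 yZ; lia.
have sub : touching Z \subset touching Z :\: touching (Y :\: Z).
  by apply/subsetP => d dZ; rewrite inE dZ no_cross.
have := small_sets_touch leZq; have := subset_leq_card sub; nia.
Qed.

Lemma touching_lower_bound (Y : {set E}) : q * #|Y| <= q.+1 * #|touching Y|.
Proof.
have [m] := ubnP #|Y|; elim: m Y => // m IH Y ltYm.
have [->|nY] := eqVneq Y set0; first by rewrite cards0 muln0.
have [Z /andP[sZY nZ] leZ] := exists_block nY.
have cardY : #|Y| = #|Z| + #|Y :\: Z|.
  by rewrite -(cardsID Z Y) (setIidPr sZY).
have := card_gt0 Z; rewrite nZ => Z_gt0.
have := IH (Y :\: Z) ltac:(lia); rewrite -(card_touching_split sZY) cardY; nia.
Qed.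

End TwoPointSets.
End Touching.

Section BoxRepresentation.

Variables (T : finType) (e : rel T) (b : nat) (l u : T -> nat -> R).
Hypothesis l_le_u : forall x i, (i < b)%N -> Rle (l x i) (u x i).
Hypothesis adj_iff_meet : forall x y, x <> y ->
  (e x y <-> exists p : nat -> R, forall i, (i < b)%N ->
     Rle (l x i) (p i) /\ Rle (p i) (u x i) /\ Rle (l y i) (p i) /\ Rle (p i) (u y i)).

Lemma box_adj_le (v w : T) (i : nat) : v <> w -> e v w -> (i < b)%N -> Rle (l v i) (u w i).
Proof.
move=> vw /(adj_iff_meet vw)[p meet] ib.
by have := meet i ib; lra.
Qed.

Lemma box_nonadj_sep (v w : T) : v <> w -> ~~ e v w ->
  exists i : 'I_b, Rlt (u v i) (l w i) \/ Rlt (u w i) (l v i).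
Proof.
move=> vw nvw.
case: (boolP [exists i : 'I_b, Rlt_dec (u v i) (l w i) || Rlt_dec (u w i) (l v i)]).
  by case/existsP=> i /orP[] /sumboolP; exists i; [left | right].
rewrite negb_exists => /forallP apart; case/negP: nvw; apply/(adj_iff_meet vw).
exists (fun i => Rmax (l v i) (l w i)) => i ib.
have /= := apart (Ordinal ib); rewrite negb_or => /andP[/sumboolP vw_i /sumboolP wv_i].
move: (l_le_u v ib) (l_le_u w ib).
by rewrite /Rmax; case: Rle_dec => *; repeat split; lra.
Qed.

End BoxRepresentation.

Definition pendant (n q : nat) :=
  {p : 'I_n * {set 'I_n} | (p.1 \in p.2) && (#|p.2| <= q)}.

Definition gadget_vertex (n q : nat) := ('I_n + pendant n q)%type.

Definition gadget (n q : nat) : rel (gadget_vertex n q) := fun v w =>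
  match v, w with
  | inl a, inl a' => a != a'
  | inl a, inr p | inr p, inl a => a != (val p).1
  | inr p, inr p' => ((val p).2 == (val p').2) && (p != p')
  end.
Arguments gadget : clear implicits.

Lemma gadget_simple (n q : nat) : simple_graph (gadget n q).
Proof.
split; last by move=> [a|p] /=; rewrite !eqxx.
by move=> [a|p] [a'|p'] /=; rewrite eq_sym // [p' == p]eq_sym.
Qed.

Definition star (I : finType) : rel (option I) := fun a b => isSome a != isSome b.
Arguments star : clear implicits.

Lemma star_connect (I : finType) (P : pred (option I)) (i j : option I) :
  P None -> P i -> P j -> connect [rel a b | [&& star I a b, P a & P b]] i j.
Proof.
move=> P0 Pi Pj; apply: (@connect_trans _ _ None).
- by case: i Pi => [i|] Pi; [apply: connect1; rewrite /= Pi P0 | apply: connect0].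
- by case: j Pj => [j|] Pj; [apply: connect1; rewrite /= Pj P0 | apply: connect0].
Qed.

Lemma star_tree (I : finType) : is_tree (star I).
Proof.
split.
- by move=> a b; rewrite /star eq_sym.
- by move=> a; rewrite /star eqxx.
- move=> i j; rewrite (@eq_connect _ _ [rel a b | [&& star I a b, predT a & predT b]]).
    exact: star_connect.
  by move=> a b /=; rewrite !andbT.
- move=> [|x1 [|x2 [|x3 c]]] // uniq_c _; rewrite /cycle rcons_path /=.
  case: x1 x2 x3 uniq_c => [?|] [?|] [?|] //= uniq_c.
  by case: c uniq_c => [|[?|] c] //=; rewrite andbF.
Qed.

Definition gadget_bag (n q : nat) (i : option {set 'I_n}) : {set gadget_vertex n q} :=
  [set inl a | a : 'I_n] :|:
  if i is Some Z then [set inr p | p : pendant n q & (val p).2 == Z] else set0.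
Arguments gadget_bag : clear implicits.

Lemma inl_in_gadget_bag (n q : nat) (a : 'I_n) (i : option {set 'I_n}) : inl a \in gadget_bag n q i.
Proof. by rewrite in_setU imset_f ?inE. Qed.

Lemma inr_in_gadget_bag (n q : nat) (p : pendant n q) (i : option {set 'I_n}) :
  (inr p \in gadget_bag n q i) = (i == Some (val p).2).
Proof.
rewrite in_setU; case: imsetP => [[a _ //]|_] /=.
case: i => [Z|]; last by rewrite inE.
apply/imsetP/eqP => [[p' p'Z [->]]|[->]]; first by move: p'Z; rewrite inE => /eqP->.
by exists p; rewrite ?inE.
Qed.

Lemma card_gadget_bag (n q : nat) (i : option {set 'I_n}) : #|gadget_bag n q i| <= n + q.
Proof.
rewrite cardsU; apply: leq_trans (leq_subr _ _) _; apply: leq_add.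
  by apply: leq_trans (leq_imset_card _ _) _; rewrite card_ord.
case: i => [Z|]; last by rewrite cards0.
rewrite card_imset; last by move=> p p' [].
have [-> | [p0]] := set_0Vmem [set p : pendant n q | (val p).2 == Z]; first by rewrite cards0.
rewrite inE => /eqP p0Z; apply: (@leq_trans #|Z|).
  rewrite -(@card_in_imset _ _ (fun p : pendant n q => (val p).1)).
    apply/subset_leq_card/subsetP => _ /imsetP[p + ->]; rewrite inE => /eqP <-.
    by case/andP: (valP p).
  move=> [[x Z1] ?] [[y Z2] ?]; rewrite !inE /= => /eqP Z1E /eqP Z2E xy.
  by apply: val_inj; rewrite /= xy Z1E Z2E.
by rewrite -p0Z; case/andP: (valP p0).
Qed.

Lemma gadget_treewidth (n q k : nat) : n + q = k.+1 -> treewidth_le (gadget n q) k.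
Proof.
move=> nqk; exists (option {set 'I_n}), (star _), (gadget_bag n q).
split; last by move=> i; rewrite -nqk card_gadget_bag.
split; first exact: star_tree.
- case=> [a|p]; first by exists None; rewrite inl_in_gadget_bag.
  by exists (Some (val p).2); rewrite inr_in_gadget_bag.
- case=> [a|p] [a'|p'] /= adj.
  + by exists None; rewrite !inl_in_gadget_bag.
  + by exists (Some (val p').2); rewrite inl_in_gadget_bag inr_in_gadget_bag eqxx.
  + by exists (Some (val p).2); rewrite inl_in_gadget_bag inr_in_gadget_bag eqxx.
  + case/andP: adj => /eqP pp' _; exists (Some (val p).2).
    by rewrite !inr_in_gadget_bag pp' eqxx.
- case=> [a|p] i j.
  + by move=> ai aj; apply: star_connect; rewrite ?inl_in_gadget_bag.
  + by rewrite !inr_in_gadget_bag => /eqP-> /eqP->; apply: connect0.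
Qed.

Section GadgetBoxicity.

Variables (n q b : nat) (l u : gadget_vertex n q -> nat -> R).
Hypothesis l_le_u : forall x i, (i < b)%N -> Rle (l x i) (u x i).
Hypothesis adj_iff_meet : forall x y, x <> y ->
  (gadget n q x y <-> exists p : nat -> R, forall i, (i < b)%N ->
     Rle (l x i) (p i) /\ Rle (p i) (u x i) /\ Rle (l y i) (p i) /\ Rle (p i) (u y i)).

Lemma gadget_adj_le (v w : gadget_vertex n q) (i : nat) :
  gadget n q v w -> (i < b)%N -> Rle (l v i) (u w i).
Proof.
move=> vw ib; apply: (box_adj_le adj_iff_meet) (vw) ib => v_w.
by move: vw; rewrite v_w (proj2 (gadget_simple n q)).
Qed.

Definition right_of (d : nat) (p : pendant n q) : bool :=
  Rlt_dec (u (inl (val p).1) d) (l (inr p) d).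
Definition left_of (d : nat) (p : pendant n q) : bool :=
  Rlt_dec (u (inr p) d) (l (inl (val p).1) d).

Definition separated_points (d : nat) : {set 'I_n} :=
  [set (val p).1 | p : pendant n q & right_of d p] :|:
  [set (val p).1 | p : pendant n q & left_of d p].

Lemma right_of_unique (d : nat) (p p' : pendant n q) : (d < b)%N ->
  right_of d p -> right_of d p' -> (val p).1 = (val p').1.
Proof.
move=> db /sumboolP pR /sumboolP p'R; apply/eqP; apply: contraT => neq; exfalso.
have : Rle (l (inr p) d) (u (inl (val p').1) d) by apply: gadget_adj_le; rewrite //= eq_sym.
have : Rle (l (inr p') d) (u (inl (val p).1) d) by apply: gadget_adj_le.
lra.
Qed.

Lemma left_of_unique (d : nat) (p p' : pendant n q) : (d < b)%N ->
  left_of d p -> left_of d p' -> (val p).1 = (val p').1.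
Proof.
move=> db /sumboolP pL /sumboolP p'L; apply/eqP; apply: contraT => neq; exfalso.
have : Rle (l (inl (val p').1) d) (u (inr p) d) by apply: gadget_adj_le; rewrite //= eq_sym.
have : Rle (l (inl (val p).1) d) (u (inr p') d) by apply: gadget_adj_le.
lra.
Qed.

Lemma right_left_same_set (d : nat) (p p' : pendant n q) : (d < b)%N ->
  (val p).2 = (val p').2 -> right_of d p -> left_of d p' -> (val p).1 = (val p').1.
Proof.
move=> db same /sumboolP pR /sumboolP p'L; apply/eqP; apply: contraT => neq; exfalso.
have : Rle (l (inr p) d) (u (inr p') d).
  by apply: gadget_adj_le => //=; rewrite same eqxx; apply: contraNneq neq => ->.
have : Rle (l (inl (val p').1) d) (u (inl (val p).1) d) by apply: gadget_adj_le; rewrite //= eq_sym.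
lra.
Qed.

Lemma card_separated_points (d : nat) : (d < b)%N -> #|separated_points d| <= 2.
Proof.
move=> db; rewrite cardsU; apply: leq_trans (leq_subr _ _) _; rewrite -[2]/(1 + 1); apply: leq_add.
- apply/card_le1_eqP => _ _ /imsetP[p + ->] /imsetP[p' + ->]; rewrite !inE.
  by move=> pR p'R; apply: right_of_unique p'R pR.
- apply/card_le1_eqP => _ _ /imsetP[p + ->] /imsetP[p' + ->]; rewrite !inE.
  by move=> pL p'L; apply: left_of_unique p'L pL.
Qed.

Lemma pendant_separated (p : pendant n q) : exists d : 'I_b, right_of d p || left_of d p.
Proof.
have [//||d sep] := box_nonadj_sep l_le_u adj_iff_meet (v := inr p) (w := inl (val p).1) _ _.
  by rewrite /= eqxx.
by exists d; apply/orP; case: sep => sep; [right | left]; apply/sumboolP.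
Qed.

Lemma small_sets_touch_separated_points (Z : {set 'I_n}) : #|Z| <= q ->
  #|Z| <= #|touching (fun d : 'I_b => separated_points d) Z|.
Proof.
move=> Zq.
pose separates (x : 'I_n) (d : 'I_b) :=
  [exists p : pendant n q, (val p == (x, Z)) && (right_of d p || left_of d p)].
apply: (leq_card_rel (R := separates)).
- move=> x xZ; have valid : ((x, Z).1 \in (x, Z).2) && (#|(x, Z).2| <= q) by rewrite /= xZ Zq.
  pose p : pendant n q := exist _ (x, Z) valid.
  have [d sep] := pendant_separated p.
  exists d; last by apply/existsP; exists p; rewrite eqxx sep.
  rewrite inE; apply/set0Pn; exists x; rewrite inE xZ andbT in_setU.
  by case/orP: sep => sep; apply/orP; [left | right]; apply/imsetP; exists p; rewrite ?inE.
- move=> x y d _ _ /existsP[p /andP[/eqP px sep]] /existsP[p' /andP[/eqP p'y sep']].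
  have db := ltn_ord d.
  have same : (val p).2 = (val p').2 by rewrite px p'y.
  have -> : x = (val p).1 by rewrite px.
  have -> : y = (val p').1 by rewrite p'y.
  case/orP: sep => [pR|pL]; case/orP: sep' => [p'R|p'L].
  + exact: right_of_unique pR p'R.
  + exact: right_left_same_set same pR p'L.
  + by apply/esym/(right_left_same_set db (esym same)).
  + exact: left_of_unique pL p'L.
Qed.

End GadgetBoxicity.

Lemma gadget_box_bound (n q b : nat) : box_representation (gadget n q) b -> q * n <= q.+1 * b.
Proof.
case=> l [u [l_le_u adj_iff_meet]].
have := touching_lower_bound (fun d => card_separated_points adj_iff_meet (ltn_ord d))
  (small_sets_touch_separated_points l_le_u adj_iff_meet) setT.
rewrite cardsT card_ord => /leq_trans; apply; rewrite leq_mul2l.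
by apply/orP; right; apply: leq_trans (max_card _) _; rewrite card_ord.
Qed.

Section IsqrtBound.

Local Open Scope R_scope.

Lemma isqrt_bound (k q n b : nat) : (1 <= k)%N -> (q * q <= k < q.+1 * q.+1)%N ->
  (n + q = k.+1)%N -> (q * n <= q.+1 * b)%N ->
  INR k * (1 - 2 / sqrt (INR k)) <= INR b.
Proof.
move=> k1 /andP[qq_le_k k_lt_qq] nqk qn_le_b.
have kR : 1 <= INR k by apply: (le_INR 1); apply/leP.
have qqR : INR q * INR q <= INR k by rewrite -mult_INR; apply/le_INR/leP.
have kqR : INR k < (INR q + 1) * (INR q + 1) by rewrite -S_INR -mult_INR; apply/lt_INR/ltP.
have nR : INR n + INR q = INR k + 1 by rewrite -S_INR -plus_INR; congr INR.
have bR : INR q * INR n <= (INR q + 1) * INR b.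
  by rewrite -S_INR -!mult_INR; apply/le_INR/leP.
have q0 := pos_INR q.
have ss : sqrt (INR k) * sqrt (INR k) = INR k by apply: sqrt_sqrt; lra.
have s0 : 0 < sqrt (INR k) by apply: sqrt_lt_R0; lra.
move: ss s0; set s := sqrt (INR k) => ss s0.
have -> : INR k * (1 - 2 / s) = INR k - 2 * s by rewrite -ss; field; lra.
have : INR q <= s by nra.
have : s < INR q + 1 by nra.
nra.
Qed.

End IsqrtBound.

Theorem theorem3 :
  forall k : nat, (1 <= k)%N ->
    exists (T : finType) (e : rel T),
      simple_graph e /\ treewidth_le e k /\
      boxicity_ge e (Rmult (INR k) (Rminus 1 (Rdiv 2 (sqrt (INR k))))).
Proof.
move=> k k1; pose q := Nat.sqrt k; pose n := k.+1 - q.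
have sqrt_k : q * q <= k < q.+1 * q.+1.
  by have := Nat.sqrt_spec k (Nat.le_0_l k); rewrite -/q; lia.
have nqk : n + q = k.+1 by rewrite /n subnK //; nia.
exists (gadget_vertex n q), (gadget n q); split; first exact: gadget_simple.
split; first exact: gadget_treewidth.
by move=> b /gadget_box_bound; apply: isqrt_bound.
Qed.
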